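(* Let $T=(V,E)$ be a tree on $n$ vertices, let $f=\{i,j\}$ be a pair of vertices with $d_{i,j}=d>1$, and let $B=E\cup\{f\}$. Then the eigenvalues of $\mathrm{Min4PC}_T[B,B]$ are $-2$ with multiplicity $n-3$, together with the three roots of the cubic polynomial $$g(x)=x^3-(2n-6)x^2-(nd^2-5d^2+2nd-2d+5n-9)x-2(d-1)^2(n-1).$$
   Context: $d_{i,j}$ is the distance in $T$ between vertices $i,j$; $\mathcal{V}_2$ is the set of 2-element subsets of $V$ (edges regarded as elements of $\mathcal{V}_2$). $\mathrm{Min4PC}_T$ is the $\binom n2\times\binom n2$ matrix indexed by $\mathcal{V}_2$ whose entry in row $\{i,j\}$, column $\{k,l\}$ is $\min\{d_{i,l}+d_{j,k},\ d_{i,k}+d_{j,l},\ d_{i,j}+d_{k,l}\}$. $M[B,B]$ denotes the principal submatrix with rows and columns indexed by $B$. *)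

From HB Require Import structures.
From mathcomp Require Import all_boot all_order all_algebra.
Set Implicit Arguments. Unset Strict Implicit. Unset Printing Implicit Defensive.
Import Order.TTheory GRing.Theory Num.Theory.

Definition edge_set n (e : rel 'I_n) : {set {set 'I_n}} :=
  [set [set x; y] | x in 'I_n, y in 'I_n & e x y].

Definition is_tree n (e : rel 'I_n) : Prop :=
  [/\ symmetric e, irreflexive e,
      (forall x y, connect e x y) & #|edge_set e| = n.-1].

Fixpoint within n (e : rel 'I_n) (k : nat) (x y : 'I_n) : bool :=
  if k is k'.+1 then within e k' x y || [exists z, within e k' x z && e z y]
  else x == y.

(* graph distance: least k with a walk of length k (any graph distance
   in a connected graph on n vertices is < n) *)
Definition dist n (e : rel 'I_n) (x y : 'I_n) : nat :=
  find (fun k => within e k x y) (iota 0 n).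

Definition V2 n : {set {set 'I_n}} := [set S : {set 'I_n} | #|S| == 2].

Definition min4pc n (e : rel 'I_n) (S U : {set 'I_n}) : nat :=
  match enum S, enum U with
  | [:: i; j], [:: k; l] =>
      minn (minn (dist e i l + dist e j k) (dist e i k + dist e j l))
           (dist e i j + dist e k l)
  | _, _ => 0
  end.

Local Open Scope ring_scope.

Definition min4pc_sub (R : nzRingType) n (e : rel 'I_n) (B : {set {set 'I_n}})
  : 'M[R]_#|B| :=
  \matrix_(a < #|B|, b < #|B|) (min4pc e (enum_val a) (enum_val b))%:R.

From HB Require Import structures.
From mathcomp Require Import all_boot all_order all_algebra.
From mathcomp Require Import zify ring.
Import Order.TTheory GRing.Theory Num.Theory.

(* In a tree two distinct edges have four-point value 2,
   since there are no triangles, while an edge {z, p z}, with p the parent map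
   towards j, has value d - 1 or d + 1 according as z does or does not lie on
   the geodesic from i to j, which has d + 1 vertices. So Min4PC_T[B,B] is
   2(J - I) with its row and column f perturbed by the excesses
   c = Min4PC_T(., f) - 2, that is U V - 2 I with U, V of rank 3. The
   Weinstein-Aronszajn identity det (y I - U V) = y^(n-3) det (y I - V U)
   reduces its characteristic polynomial to (x + 2)^(n-3) times a cubic
   depending only on n, sum c and sum c^2. *)

Set Implicit Arguments.
Unset Strict Implicit.
Unset Printing Implicit Defensive.

Local Open Scope ring_scope.

(* Weinstein-Aronszajn: compare the determinants of the two block
   eliminations of [y I, U; V, I]. *)
Lemma det_scalar_sub_mulmxC (R : idomainType) m k (U : 'M[R]_(m, k)) (V : 'M[R]_(k, m)) y :
  y != 0 -> (k <= m)%N ->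
  \det (y%:M - U *m V) = y ^+ (m - k) * \det (y%:M - V *m U).
Proof.
move=> y0 km; pose P := block_mx (y%:M : 'M_m) U V (1%:M : 'M_k).
have detP : \det P = \det (y%:M - U *m V).
  have : P *m block_mx 1%:M 0 (- V) 1%:M = block_mx (y%:M - U *m V) U 0 1%:M.
    by rewrite mulmx_block !mulmx1 !mulmx0 !mul1mx !add0r mulmxN addrN.
  move/(congr1 determinant); rewrite det_mulmx det_lblock !det1 !mulr1 => ->.
  by rewrite det_ublock det1 mulr1.
have yk_detP : y ^+ k * \det P = y ^+ m * \det (y%:M - V *m U).
  have : block_mx 1%:M 0 (- V) y%:M *m P = block_mx y%:M U 0 (y%:M - V *m U).
    rewrite mulmx_block !mul1mx !mul0mx !addr0 mulNmx mul_scalar_mx mul_mx_scalar.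
    by rewrite addNr mulmx1 mulNmx addrC.
  move/(congr1 determinant); rewrite det_mulmx det_lblock det1 mul1r !det_scalar => ->.
  by rewrite det_ublock det_scalar.
apply: (mulfI (expf_neq0 k y0)).
by rewrite -detP yk_detP mulrA -exprD subnKC.
Qed.

Lemma char_poly_mulmx_sub_scalar (R : idomainType) m k
    (U : 'M[R]_(m, k)) (V : 'M[R]_(k, m)) a : (k <= m)%N ->
  char_poly (U *m V - a%:M) =
  ('X + a%:P) ^+ (m - k) * \det (('X + a%:P)%:M - map_mx polyC (V *m U)).
Proof.
move=> km; have Xa0 : 'X + a%:P != 0 by rewrite -size_poly_eq0 size_XaddC.
rewrite map_mxM -det_scalar_sub_mulmxC // /char_poly /char_poly_mx.
by rewrite map_mxB map_mxM map_scalar_mx opprB addrA -(raddfD (@scalar_mx _ m)).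
Qed.

Definition mx33 (R : Type) (a b c d e f g h k : R) : 'M[R]_3 :=
  \matrix_(s, t) nth a (nth [::] [:: [:: a; b; c]; [:: d; e; f]; [:: g; h; k]] s) t.

Lemma det_mx33 (R : comNzRingType) (a b c d e f g h k : R) :
  \det (mx33 a b c d e f g h k) =
  a * (e * k - f * h) - b * (d * k - f * g) + c * (d * h - e * g).
Proof.
rewrite (expand_det_row _ 0) !big_ord_recl big_ord0 /cofactor.
rewrite !(expand_det_row _ 0) !big_ord_recl !big_ord0 /cofactor !det_mx11 !mxE /=.
ring.
Qed.

Lemma map_scalar_sub_mx33 (R S : nzRingType) (phi : {rmorphism R -> S}) y
    (a b c d e f g h k : R) :
  y%:M - map_mx phi (mx33 a b c d e f g h k) =
  mx33 (y - phi a) (- phi b) (- phi c) (- phi d) (y - phi e) (- phi f)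
       (- phi g) (- phi h) (y - phi k).
Proof.
apply/matrixP => s t; rewrite !mxE.
by case: s t => [[|[|[|?]]] ?] [[|[|[|?]]] ?] //=; rewrite ?mulr1n ?mulr0n ?sub0r.
Qed.

Lemma sum_natr_eq_mul (R : nzSemiRingType) m (j : 'I_m) (G : 'I_m -> R) :
  \sum_a (a == j)%:R * G a = G j.
Proof.
by rewrite (bigD1 j) //= eqxx mul1r big1 ?addr0 // => a /negbTE ->; rewrite mul0r.
Qed.

Lemma sum_mul_natr_eq (R : nzSemiRingType) m (j : 'I_m) (G : 'I_m -> R) :
  \sum_a G a * (a == j)%:R = G j.
Proof.
by rewrite (bigD1 j) //= eqxx mulr1 big1 ?addr0 // => a /negbTE ->; rewrite mulr0.
Qed.

Section BorderedMatrix.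

Variables (R : comNzRingType) (m : nat) (f0 : 'I_m) (c : 'I_m -> R).

Definition bordered_mx : 'M[R]_m := \matrix_(a, b)
  if a == b then 0 else if a == f0 then 2 + c b else if b == f0 then 2 + c a else 2.

Definition bordered_left : 'M[R]_(m, 3) := \matrix_(a, t) [:: 1; c a; (a == f0)%:R]`_t.

Definition bordered_right : 'M[R]_(3, m) := \matrix_(t, b) [:: 2; (b == f0)%:R; c b]`_t.

Hypothesis c_f0 : c f0 = 0.

Lemma bordered_mxE : bordered_mx = bordered_left *m bordered_right - 2%:M.
Proof.
apply/matrixP => a b; rewrite !mxE !big_ord_recl big_ord0 !mxE /=.
have [<- | ab] := eqVneq a b.
  by have [-> | af] := eqVneq a f0; rewrite ?c_f0 /=; ring.
by have [-> | af] := eqVneq a f0; have [-> | bf] := eqVneq b f0;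
  rewrite ?c_f0 //=; ring.
Qed.

Lemma bordered_right_mul_left :
  bordered_right *m bordered_left =
  mx33 (2 * m%:R) (2 * \sum_a c a) 2 1 0 1 (\sum_a c a) (\sum_a c a ^+ 2) 0.
Proof.
apply/matrixP => s t; rewrite !mxE; under eq_bigr do rewrite !mxE.
case: s t => [[|[|[|?]]] ?] [[|[|[|?]]] ?] //=.
all: rewrite ?sum_natr_eq_mul ?sum_mul_natr_eq ?eqxx ?c_f0 -?mulr_sumr //.
  by rewrite sumr_const card_ord.
by apply: eq_bigr => a _; rewrite mulr1.
Qed.

End BorderedMatrix.

Definition bordered_cubic (R : comNzRingType) (m s q : R) : {poly R} :=
  let y := 'X + 2%:P in
  (y - (2 * m)%:P) * (y ^+ 2 - q%:P) - 4%:P * s%:P * y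
  - 2%:P * (s ^+ 2)%:P - 2%:P * q%:P.

Lemma char_poly_bordered (R : idomainType) m (f0 : 'I_m) (c : 'I_m -> R) :
  c f0 = 0 -> (3 <= m)%N ->
  char_poly (bordered_mx f0 c) =
  ('X + 2%:P) ^+ (m - 3) * bordered_cubic m%:R (\sum_a c a) (\sum_a c a ^+ 2).
Proof.
move=> c_f0 m3; rewrite bordered_mxE // char_poly_mulmx_sub_scalar //.
rewrite bordered_right_mul_left // map_scalar_sub_mx33 det_mx33 /bordered_cubic.
congr (_ * _); ring.
Qed.

Local Close Scope ring_scope.

Lemma enum_set2 (T : finType) (x y : T) : x != y ->
  enum [set x; y] = [:: x; y] \/ enum [set x; y] = [:: y; x].
Proof.
move=> xy; have := enum_uniq (mem [set x; y]).
have : size (enum [set x; y]) = 2 by rewrite -cardE cards2 xy.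
have : forall z, z \in enum [set x; y] -> (z == x) || (z == y).
  by move=> z; rewrite mem_enum !inE.
case: (enum _) => [|a [|b [|? ?]]] // mem_xy _; rewrite /= inE andbT.
have /orP[] := mem_xy a (mem_head _ _) => /eqP->;
have /orP[] := mem_xy b (mem_last _ [:: b]) => /eqP->; rewrite ?eqxx //; by [left | right].
Qed.

Section Graph.

Variables (n : nat) (e : rel 'I_n).
Local Notation D := (dist e).

Lemma withinW k x y : within e k x y -> within e k.+1 x y.
Proof. by move=> h; rewrite /= h. Qed.

Lemma within_leq k k' x y : (k <= k')%N -> within e k x y -> within e k' x y.
Proof.
elim: k' => [|k' IH]; first by rewrite leqn0 => /eqP ->.
by rewrite leq_eqVlt ltnS => /predU1P[-> // | /IH h /h /withinW].
Qed.

Lemma within_cons k w x y : e w x -> within e k x y -> within e k.+1 w y.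
Proof.
move=> ewx; elim: k y => [|k IH] y.
  by move=> /eqP <-; apply/orP; right; apply/existsP; exists w; rewrite eqxx ewx.
case/orP=> [h|/existsP[z /andP[h ezy]]]; apply/orP; first by left; exact: IH.
by right; apply/existsP; exists z; rewrite ezy andbT; exact: IH.
Qed.

Lemma within_cat k1 k2 x y z :
  within e k1 x y -> within e k2 y z -> within e (k1 + k2) x z.
Proof.
move=> h1; elim: k2 z => [|k2 IH] z; first by move=> /eqP <-; rewrite addn0.
rewrite addnS; case/orP=> [h|/existsP[u /andP[h eu]]]; apply/orP; first by left; exact: IH.
by right; apply/existsP; exists u; rewrite eu andbT; exact: IH.
Qed.

Lemma within_path x p : path e x p -> within e (size p) x (last x p).
Proof.
elim: p x => [|y p IH] x /=; first by rewrite eqxx.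
by case/andP=> exy /IH; apply: within_cons.
Qed.

Hypothesis e_sym : symmetric e.

Lemma within_sym k x y : within e k x y -> within e k y x.
Proof.
elim: k y => [|k IH] y; first by rewrite /= eq_sym.
case/orP=> [/IH/withinW // | /existsP[z /andP[/IH h ezy]]].
by apply: within_cons h; rewrite e_sym.
Qed.

Hypothesis e_conn : forall x y : 'I_n, connect e x y.

(* A shortest walk repeats no vertex, hence has fewer than n steps. *)
Lemma within_all x y : within e n.-1 x y.
Proof.
case/connectP: (e_conn x y) => p pth ->; case: (shortenP pth) => p' pp' up' _.
apply: within_leq (within_path pp').
have := max_card (mem (x :: p')); rewrite card_ord (card_uniqP _) //= => h.
by rewrite -ltnS (ltn_predK (ltn_ord x)).
Qed.

Lemma dist_leq k x y : within e k x y -> (D x y <= k)%N.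
Proof.
move=> h; rewrite /dist; case: (ltnP k n) => kn.
  rewrite leqNgt; apply/negP => /(before_find 0).
  by rewrite (nth_iota _ _ kn) add0n h.
by apply: leq_trans (find_size _ _) _; rewrite size_iota.
Qed.

Lemma has_within x y : has (fun k => within e k x y) (iota 0 n).
Proof.
apply/hasP; exists n.-1; last exact: within_all.
by rewrite mem_iota /= (ltn_predK (ltn_ord x)).
Qed.

Lemma dist_lt x y : (D x y < n)%N.
Proof. by have := has_within x y; rewrite has_find size_iota. Qed.

Lemma dist_within x y : within e (D x y) x y.
Proof. by have := nth_find 0 (has_within x y); rewrite nth_iota ?dist_lt. Qed.

Lemma dist0 x : D x x = 0.
Proof. by apply/eqP; rewrite -leqn0 dist_leq /=. Qed.

Lemma dist_eq0 x y : D x y = 0 -> x = y.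
Proof. by move=> h; have := dist_within x y; rewrite h => /eqP. Qed.

Lemma distC x y : D x y = D y x.
Proof. by apply/eqP; rewrite eqn_leq !dist_leq // within_sym // dist_within. Qed.

Lemma dist_triangle x y z : (D x z <= D x y + D y z)%N.
Proof. exact/dist_leq/within_cat/dist_within/dist_within. Qed.

Lemma dist_eq1 x y : D x y = 1 -> e x y.
Proof.
move=> h; have := dist_within x y; rewrite h /=.
case/orP=> [/eqP xy | /existsP[z /andP[/eqP <- //]]].
by rewrite xy dist0 in h.
Qed.

Lemma dist_pred x y k : D x y = k.+1 -> exists2 z, e z y & D x z = k.
Proof.
move=> h; have := dist_within x y; rewrite h /=.
case/orP=> [/dist_leq | /existsP[z /andP[hz ezy]]]; first by rewrite h ltnn.
exists z => //; apply/eqP; rewrite eqn_leq dist_leq //=.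
have zy : (D z y <= 1)%N.
  by apply: dist_leq; apply/orP; right; apply/existsP; exists z; rewrite eqxx.
have := dist_triangle x z y; lia.
Qed.

Hypothesis e_irr : irreflexive e.

Lemma dist_edge x y : e x y -> D x y = 1.
Proof.
move=> exy; apply/eqP; rewrite eqn_leq lt0n dist_leq /=; last first.
  by apply/orP; right; apply/existsP; exists x; rewrite eqxx exy.
by apply/eqP => /dist_eq0 xy; rewrite xy e_irr in exy.
Qed.

Definition parent_map (r : 'I_n) (p : 'I_n -> 'I_n) :=
  forall x, x != r -> e x (p x) /\ (D r (p x)).+1 = D r x.

Lemma parent_map_exists r : exists p, parent_map r p.
Proof.
exists (fun x => odflt x [pick y | e x y && ((D r y).+1 == D r x)]) => x xr.
have [k hk] : exists k, D r x = k.+1.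
  case h: (D r x) => [|k]; last by exists k.
  by move/dist_eq0: h xr => ->; rewrite eqxx.
case: (dist_pred hk) => z ezx hz.
case: pickP => [y /andP[exy /eqP hy] // | /(_ z)] /=.
by rewrite e_sym ezx hz hk eqxx.
Qed.

Lemma in_edge_set x y : e x y -> [set x; y] \in edge_set e.
Proof. by move=> exy; apply/imset2P; exists x y; rewrite ?inE. Qed.

Lemma edge_setP S :
  S \in edge_set e -> exists x y, [/\ e x y, x != y & S = [set x; y]].
Proof.
case/imset2P => x y _; rewrite inE => exy ->; exists x, y; split => //.
by apply: contraTneq exy => ->; rewrite e_irr.
Qed.

Lemma parent_edge_inj r p :
  parent_map r p -> {in [set~ r] &, injective (fun x => [set x; p x])}.
Proof.
move=> pr x y; rewrite !inE => xr yr h; apply/eqP; apply: contraT => xy.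
have : x \in [set y; p y] by rewrite -h set21.
rewrite !inE (negbTE xy) /= => /eqP xpy.
have : y \in [set x; p x] by rewrite h set21.
rewrite !inE eq_sym (negbTE xy) /= => /eqP ypx.
case: (pr x xr) => _; case: (pr y yr) => _; rewrite -xpy -ypx; lia.
Qed.

Hypothesis e_card : #|edge_set e| = n.-1.

(* The n - 1 distinct edges {x, p x} exhaust the n - 1 edges of the tree. *)
Lemma edge_set_parent r p :
  parent_map r p -> edge_set e = [set [set x; p x] | x in [set~ r]].
Proof.
move=> pr; apply/eqP; rewrite eq_sym eqEcard; apply/andP; split.
  apply/subsetP => S /imsetP[x]; rewrite !inE => xr ->.
  by case: (pr x xr) => /in_edge_set.
by rewrite e_card card_in_imset ?cardsC1 ?card_ord //; apply: parent_edge_inj.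
Qed.

(* Every edge is some {z, p z}, whose endpoints are at consecutive distances from r. *)
Lemma dist_edge_step r a b :
  e a b -> D r a = (D r b).+1 \/ D r b = (D r a).+1.
Proof.
move=> eab; have [p pr] := parent_map_exists r.
have := in_edge_set eab; rewrite (edge_set_parent pr) => /imsetP[z].
rewrite !inE => zr hS; case: (pr z zr) => _ hz.
have : a != b by apply: contraTneq eab => ->; rewrite e_irr.
have : a \in [set z; p z] by rewrite -hS set21.
have : b \in [set z; p z] by rewrite -hS set22.
by rewrite !inE => /orP[]/eqP-> /orP[]/eqP->; rewrite ?eqxx //= => _; lia.
Qed.

(* Redirect a parent map at x to y1: the edge {x, y2} is still some {z, p' z}. *)
Lemma parent_uniq r x y1 y2 : e x y1 -> e x y2 ->
  (D r y1).+1 = D r x -> (D r y2).+1 = D r x -> y1 = y2.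
Proof.
move=> e1 e2 h1 h2; have [p pr] := parent_map_exists r.
pose p' z := if z == x then y1 else p z.
have pr' : parent_map r p'.
  by move=> z zr; rewrite /p'; case: eqP => [->|_]; [split | exact: pr].
have := in_edge_set e2; rewrite (edge_set_parent pr') => /imsetP[z].
rewrite !inE => zr hS; case: (pr' z zr) => _.
have : x \in [set z; p' z] by rewrite -hS set21.
have : y2 \in [set z; p' z] by rewrite -hS set22.
rewrite /p' !inE; have [zx | zx] := eqVneq z x.
  rewrite zx /= => /orP[/eqP y2x | /eqP //] _.
  by rewrite y2x e_irr in e2.
rewrite /= => /orP[/eqP y2z | /eqP y2pz] /eqP xpz.
  by move: h2; rewrite y2z xpz; lia.
by rewrite y2pz -xpz e_irr in e2.
Qed.

Lemma odd_dist r x y : odd (D r y) = odd (D r x + D x y).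
Proof.
move: {2}(D x y) (erefl (D x y)) => k.
elim: k y => [|k IH] y hk; first by rewrite (dist_eq0 hk) dist0 addn0.
case: (dist_pred hk) => z ezy hz; have := IH z hz.
by rewrite hk addnS /=; case: (dist_edge_step r ezy) => ->; lia.
Qed.

Lemma no_triangle a b c : e a b -> e a c -> e b c -> False.
Proof.
move=> eab eac ebc.
by case: (dist_edge_step a ebc); rewrite (dist_edge eab) (dist_edge eac).
Qed.

Definition four_point a b c d :=
  minn (minn (D a d + D b c) (D a c + D b d)) (D a b + D c d).

Lemma min4pc_set2 a b c d : a != b -> c != d ->
  min4pc e [set a; b] [set c; d] = four_point a b c d.
Proof.
move=> ab cd; rewrite /min4pc /four_point.
have := distC a b; have := distC c d.
by case: (enum_set2 ab) => ->; case: (enum_set2 cd) => ->; lia.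
Qed.

Lemma four_point_diag a b : four_point a b a b = 0.
Proof. by rewrite /four_point !dist0; lia. Qed.

Lemma four_point_sym a b c d : four_point a b c d = four_point c d a b.
Proof.
rewrite /four_point.
have := distC a d; have := distC b c; have := distC a c; have := distC b d; lia.
Qed.

Lemma dist_edges_ge2 a b c d : e a b -> e c d -> [set a; b] != [set c; d] ->
  (2 <= D a c + D b d)%N.
Proof.
move=> eab ecd; apply: contraNT; rewrite -ltnNge.
case hac: (D a c) => [|[|?]]; case hbd: (D b d) => [|[|?]] //= _.
- by rewrite (dist_eq0 hac) (dist_eq0 hbd) eqxx.
- by move: ecd (dist_eq1 hbd); rewrite -(dist_eq0 hac) => /(no_triangle eab).
- move: ecd (dist_eq1 hac); rewrite -(dist_eq0 hbd) e_sym => ebc eac.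
  by case: (no_triangle eab eac) => //; rewrite e_sym.
Qed.

Lemma four_point_edges a b c d : e a b -> e c d -> [set a; b] != [set c; d] ->
  four_point a b c d = 2.
Proof.
move=> eab ecd neq; rewrite /four_point (dist_edge eab) (dist_edge ecd).
have := dist_edges_ge2 eab ecd neq.
have : (2 <= D a d + D b c)%N.
  by apply: dist_edges_ge2; rewrite // 1?e_sym // [[set d; c]]setUC.
lia.
Qed.

Lemma min4pc_diag S : S \in V2 n -> min4pc e S S = 0.
Proof. by rewrite inE => /cards2P[x [y [xy ->]]]; rewrite min4pc_set2 // four_point_diag. Qed.

Lemma min4pcC S T : S \in V2 n -> T \in V2 n -> min4pc e S T = min4pc e T S.
Proof.
rewrite !inE => /cards2P[a [b [ab ->]]] /cards2P[c [d [cd ->]]].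
by rewrite !min4pc_set2 // four_point_sym.
Qed.

Lemma min4pc_edges S T :
  S \in edge_set e -> T \in edge_set e -> S != T -> min4pc e S T = 2.
Proof.
case/edge_setP => a [b [eab ab ->]]; case/edge_setP => c [d [ecd cd ->]] neq.
by rewrite min4pc_set2 // four_point_edges.
Qed.

Lemma edge_set_V2 S : S \in edge_set e -> S \in V2 n.
Proof. by case/edge_setP => x [y [_ xy ->]]; rewrite inE cards2 xy. Qed.

Variables i j : 'I_n.
Local Notation d := (D i j).

Definition on_geodesic z := D i z + D z j == d.

(* Off the geodesic, D i z + D z j has the parity of d, so it is at least d + 2. *)
Lemma four_point_parent p z : parent_map j p -> z != j ->
  four_point z (p z) i j = if on_geodesic z then d.-1 else d.+1.
Proof.
move=> pj zj; case: (pj z zj) => ezp.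
rewrite /four_point /on_geodesic (dist_edge ezp).
have := dist_triangle i (p z) j; have := dist_triangle i z j.
have := distC z i; have := distC j (p z); have := distC j z; have := distC (p z) i.
have := odd_dist z i j; case: eqP; lia.
Qed.

Lemma geodesic_dist_surj k : (k <= d)%N -> exists2 z, on_geodesic z & D i z = k.
Proof.
move=> kd; rewrite -(subKn kd); elim: (d - k) (leq_subr k d) => [|m IH] md.
  by exists j; rewrite ?subn0 // /on_geodesic dist0 addn0.
have [z /eqP geo_z iz] := IH (ltnW md).
have [w ewz iw] : exists2 w, e w z & D i w = d - m.+1.
  by apply: dist_pred; rewrite iz; lia.
exists w => //; apply/eqP.
have := dist_triangle i w j; have := dist_triangle w z j.
rewrite (dist_edge ewz); lia.
Qed.

Lemma geodesic_inj t z1 z2 : on_geodesic z1 -> on_geodesic z2 ->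
  D z1 j = t -> D z2 j = t -> z1 = z2.
Proof.
elim: t z1 z2 => [|t IH] z1 z2 geo1 geo2 h1 h2.
  by rewrite (dist_eq0 h1) (dist_eq0 h2).
have step z : on_geodesic z -> D z j = t.+1 ->
    exists2 w, e w z & on_geodesic w /\ D w j = t.
  move=> /eqP geo hz; have [w ewz hw] : exists2 w, e w z & D j w = t.
    by apply: dist_pred; rewrite distC.
  exists w => //; rewrite distC; split => //; apply/eqP.
  have := dist_triangle i w j; have := dist_triangle i z w.
  have := distC w j; have := distC z w; rewrite (dist_edge ewz); lia.
have [w1 ew1 [geo_w1 hw1]] := step z1 geo1 h1.
have [w2 ew2 [geo_w2 hw2]] := step z2 geo2 h2.
have w12 := IH w1 w2 geo_w1 geo_w2 hw1 hw2; subst w2.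
move: geo1 geo2 geo_w1 => /eqP ? /eqP ? /eqP ?.
by apply: (@parent_uniq i w1) => //; lia.
Qed.

(* One vertex at each distance 0..d from i. *)
Lemma card_geodesic : #|[set z | on_geodesic z]| = d.+1.
Proof.
pose h z : 'I_n := Ordinal (dist_lt i z).
rewrite -(card_in_imset (f := h)); last first.
  move=> z1 z2; rewrite !inE => geo1 geo2 /(congr1 val) /= h12.
  apply: (geodesic_inj geo1 geo2 (erefl _)).
  by move: geo1 geo2 => /eqP ? /eqP ?; lia.
have dn : (d.+1 <= n)%N := dist_lt i j.
have -> : h @: [set z | on_geodesic z] = widen_ord dn @: [set: 'I_d.+1].
  apply/setP => k; apply/imsetP/imsetP => [[z]|[k' _ ->]].
    rewrite inE => /eqP geo ->.
    have lt : (D i z < d.+1)%N by rewrite -geo ltnS leq_addr.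
    by exists (Ordinal lt); rewrite ?inE //; apply/val_inj.
  have [z geo iz] := geodesic_dist_surj (ltn_ord k' : (k' <= d)%N).
  by exists z; rewrite ?inE //; apply/val_inj.
by rewrite card_imset ?cardsT ?card_ord // => k1 k2 /(congr1 val) /= /val_inj.
Qed.

Lemma card_geodesicD1 : #|[set z | on_geodesic z] :\ j| = d.
Proof.
have := card_geodesic; rewrite (cardsD1 j) inE /on_geodesic dist0 addn0 eqxx.
by move=> [].
Qed.

(* Every tree edge is {z, p z} for a unique z != j, with p the parent map towards j. *)
Lemma sum_min4pc_edges (R : nmodType) (F : nat -> R) : i != j ->
  (\sum_(S in edge_set e) F (min4pc e S [set i; j])
   = F d.-1 *+ d + F d.+1 *+ (n.-1 - d)%N)%R.
Proof.
move=> ij; have [p pj] := parent_map_exists j.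
rewrite (edge_set_parent pj) big_imset /=; last exact: parent_edge_inj.
rewrite (eq_bigr (fun z => F (if on_geodesic z then d.-1 else d.+1))); last first.
  move=> z; rewrite !inE => zj; case: (pj z zj) => ezp _.
  rewrite min4pc_set2 ?four_point_parent //.
  by apply: contraTneq ezp => <-; rewrite e_irr.
set A := [set z | on_geodesic z].
have cardIA : #|[set~ j] :&: A| = d by rewrite setIC -setDE card_geodesicD1.
have cardDA : #|[set~ j] :\: A| = (n.-1 - d)%N.
  by rewrite cardsD cardIA cardsC1 card_ord.
rewrite (big_setID A) /=.
rewrite [X in (X + _)%R](eq_bigr (fun=> F d.-1)) => [|z]; last first.
  by rewrite !inE => /andP[_ ->].
rewrite [X in (_ + X)%R](eq_bigr (fun=> F d.+1)) => [|z]; last first.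
  by rewrite !inE => /andP[/negbTE -> _].
by rewrite !sumr_const cardIA cardDA.
Qed.

Hypothesis d_gt1 : (1 < d)%N.

Local Notation f := [set i; j].
Local Notation B := (edge_set e :|: [set f]).

Lemma i_neq_j : i != j.
Proof. by apply: contraTneq d_gt1 => ->; rewrite dist0. Qed.

Lemma pair_notin_edge_set : f \notin edge_set e.
Proof.
apply/negP => /edge_setP[x [y [exy _ fxy]]]; move: d_gt1.
have : i \in [set x; y] by rewrite -fxy set21.
have : j \in [set x; y] by rewrite -fxy set22.
rewrite !inE => /orP[]/eqP-> /orP[]/eqP->; rewrite ?dist0 //.
  by rewrite distC (dist_edge exy).
by rewrite (dist_edge exy).
Qed.

Lemma card_edges_pair : #|B| = n.
Proof.
rewrite setUC cardsU1 pair_notin_edge_set e_card add1n prednK //.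
exact: leq_ltn_trans (ltn_ord i).
Qed.

Local Open Scope ring_scope.

Definition min4pc_excess (R : nzRingType) (S : {set 'I_n}) : R :=
  if S == f then 0 else (min4pc e S f)%:R - 2.

Lemma min4pc_sub_bordered (R : comNzRingType) :
  exists2 f0 : 'I_#|B|, enum_val f0 = f &
    min4pc_sub R e B = bordered_mx f0 (fun a => min4pc_excess R (enum_val a)).
Proof.
have fB : f \in B by rewrite !inE eqxx orbT.
set f0 := enum_rank_in fB f; have val_f0 : enum_val f0 = f by rewrite enum_rankK_in.
exists f0 => //; apply/matrixP => a b; rewrite !mxE.
have eq_f0 a' : (a' == f0) = (enum_val a' == f) by rewrite -(inj_eq enum_val_inj) val_f0.
have edge_a' a' : a' != f0 -> enum_val a' \in edge_set e.
  by rewrite eq_f0 => a'f; have := enum_valP a'; rewrite !inE (negbTE a'f) orbF.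
have V2_a' (a' : 'I_#|B|) : enum_val a' \in V2 n.
  have [-> | /edge_a'/edge_set_V2 //] := eqVneq a' f0.
  by rewrite val_f0 inE cards2 i_neq_j.
have [<- | ab] := eqVneq a b; first by rewrite min4pc_diag.
rewrite /min4pc_excess -!eq_f0; have [af | af] := eqVneq a f0.
  by rewrite eq_sym -af (negbTE ab) af val_f0 min4pcC -?val_f0 // addrC subrK.
have [bf | bf] := eqVneq b f0; first by rewrite bf val_f0 addrC subrK.
by rewrite min4pc_edges ?edge_a' // (inj_eq enum_val_inj).
Qed.

Lemma sum_min4pc_excess (R : comNzRingType) (F : R -> R) : F 0 = 0 ->
  \sum_(a < #|B|) F (min4pc_excess R (enum_val a)) =
  F (d%:R - 3) * d%:R + F (d%:R - 1) * (n%:R - 1 - d%:R).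
Proof.
move=> F0; rewrite -(big_enum_val (fun S => F (min4pc_excess R S))) /=.
rewrite setUC big_setU1 ?pair_notin_edge_set //= /min4pc_excess eqxx F0 add0r.
rewrite (eq_bigr (fun S => F ((min4pc e S f)%:R - 2))) => [|S SE]; last first.
  by rewrite ifN //; apply: contraNneq pair_notin_edge_set => <-.
rewrite (sum_min4pc_edges (fun k => F (k%:R - 2))) ?i_neq_j //.
rewrite -[_ *+ d]mulr_natr -[_ *+ (n.-1 - d)]mulr_natr.
have dn : (d < n)%N := dist_lt i j.
have -> : d.-1%:R = d%:R - 1 :> R by rewrite -subn1 natrB // ltnW.
have -> : d.+1%:R = d%:R + 1 :> R by rewrite -addn1 natrD.
have -> : (n.-1 - d)%:R = n%:R - 1 - d%:R :> R.
  by rewrite -subn1 -subnDA natrB ?natrD; [ring | lia].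
congr (F _ * _ + F _ * _); ring.
Qed.

End Graph.

Local Open Scope ring_scope.

Lemma bordered_cubic_geodesic (R : comNzRingType) (nR dR : R) :
  bordered_cubic nR ((dR - 3) * dR + (dR - 1) * (nR - 1 - dR))
    ((dR - 3) ^+ 2 * dR + (dR - 1) ^+ 2 * (nR - 1 - dR)) =
  'X^3 - ((2 * nR - 6)%:P * 'X^2)
  - ((nR * dR ^+ 2 - 5 * dR ^+ 2 + 2 * nR * dR - 2 * dR + 5 * nR - 9)%:P * 'X)
  - (2 * (dR - 1) ^+ 2 * (nR - 1))%:P.
Proof. rewrite /bordered_cubic; ring. Qed.

Theorem theorem3p4 (R : realFieldType) (n : nat) (e : rel 'I_n) (i j : 'I_n) :
  is_tree e ->
  (1 < dist e i j)%N ->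
  let d := dist e i j in
  let B := edge_set e :|: [set [set i; j]] in
  let nR : R := n%:R in
  let dR : R := d%:R in
  let g : {poly R} :=
    'X^3 - ((2 * nR - 6)%:P * 'X^2)
    - ((nR * dR ^+ 2 - 5 * dR ^+ 2 + 2 * nR * dR - 2 * dR + 5 * nR - 9)%:P * 'X)
    - (2 * (dR - 1) ^+ 2 * (nR - 1))%:P in
  char_poly (min4pc_sub R e B) = ('X + 2%:P) ^+ (n - 3) * g.
Proof.
move=> [e_sym e_irr e_conn e_card] d_gt1 d B nR dR g.
have card_B : #|B| = n := card_edges_pair e_sym e_conn e_irr e_card d_gt1.
have [f0 val_f0 ->] := min4pc_sub_bordered e_sym e_conn e_irr e_card d_gt1 R.
have sum_excess := sum_min4pc_excess e_sym e_conn e_irr e_card d_gt1.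
rewrite char_poly_bordered; last 2 first.
- by rewrite val_f0 /min4pc_excess eqxx.
- by rewrite card_B; exact: leq_trans (dist_lt e_conn i j).
rewrite (sum_excess _ (fun x => x)) // (sum_excess _ (fun x => x ^+ 2)) ?expr0n //.
by rewrite card_B bordered_cubic_geodesic.
Qed.
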